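(* Let $\Theta\subseteq\mathbb{R}^p$ be convex and let $f=\frac1T\sum_{t=1}^Tf^t$ where each $f^t:\mathbb{R}^p\to\mathbb{R}$ is continuous, $f$ is convex with a minimizer $\theta^\star$ on $\Theta$, $f^\star\triangleq\min_{\theta\in\Theta}f(\theta)$, and $\delta\triangleq1/T$. Consider the incremental scheme (MISO): given $\theta_0\in\Theta$, choose surrogates $g_0^t$ of $f^t$ near $\theta_0$ for all $t$; for $n\ge1$, pick $\hat t_n\in\{1,\dots,T\}$ uniformly at random (independently), choose a surrogate $g_n^{\hat t_n}$ of $f^{\hat t_n}$ near $\theta_{n-1}$, set $g_n^t\triangleq g_{n-1}^t$ for $t\ne\hat t_n$, and set $\theta_n\in\operatorname{arg\,min}_{\theta\in\Theta}\frac1T\sum_{t=1}^Tg_n^t(\theta)$. Assume every surrogate is a majorant function, with $g_0^t\in\mathcal{S}_{L,\rho}(f^t,\theta_0)$ and $g_n^{\hat t_n}\in\mathcal{S}_{L,\rho}(f^{\hat t_n},\theta_{n-1})$, where $\rho\ge L$. Then $$\mathbb{E}[f(\theta_n)-f^\star]\le\frac{L\|\theta^\star-\theta_0\|_2^2}{2\delta n}\quad\text{for all }n\ge1.$$ If moreover $f$ is $\mu$-strongly convex, then for all $n\ge1$, $$\mathbb{E}[\|\theta^\star-\theta_n\|_2^2]\le\Big((1-\delta)+\delta\frac{L}{\rho+\mu}\Big)^n\|\theta^\star-\theta_0\|_2^2,\qquad\mathbb{E}[f(\theta_n)-f^\star]\le\Big((1-\delta)+\delta\frac{L}{\rho+\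mu}\Big)^{n-1}\frac{L\|\theta^\star-\theta_0\|_2^2}{2}.$$
   Context: First-order surrogates: $g:\mathbb{R}^p\to\mathbb{R}$ belongs to $\mathcal{S}_L(\phi,\kappa)$ if (a) $g(\theta')\ge\phi(\theta')$ for all $\theta'\in\operatorname{arg\,min}_{\theta\in\Theta}g(\theta)$, and (b) $h\triangleq g-\phi$ is differentiable with $L$-Lipschitz gradient, $h(\kappa)=0$, $\nabla h(\kappa)=0$; $\mathcal{S}_{L,\rho}(\phi,\kappa)$ is the subset of $\rho$-strongly convex elements. A majorant function satisfies $g\ge\phi$ everywhere. The minimizers are assumed to exist. *)

From HB Require Import structures.
From mathcomp Require Import all_boot all_order all_algebra.
From mathcomp Require Import all_classical all_reals all_analysis.
Set Implicit Arguments. Unset Strict Implicit. Unset Printing Implicit Defensive.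
Import Order.TTheory GRing.Theory Num.Theory.
Import numFieldNormedType.Exports.
Local Open Scope ring_scope.

Section MISO_defs.
Variables (R : realType) (p : nat).
Notation V := 'rV[R]_p.

Definition norm2 (v : V) : R := Num.sqrt (\sum_(i < p) (v ord0 i) ^+ 2).

Definition grad (h : V -> R) (x : V) : V :=
  \row_(i < p) ('D_(delta_mx ord0 i : V) h x).

Definition convex_fun (f : V -> R) : Prop :=
  forall x y (l : R), 0 <= l <= 1 ->
    f (l *: x + (1 - l) *: y) <= l * f x + (1 - l) * f y.

Definition strongly_convex (mu : R) (f : V -> R) : Prop :=
  forall x y (l : R), 0 <= l <= 1 ->
    f (l *: x + (1 - l) *: y) <=
      l * f x + (1 - l) * f y - mu / 2 * l * (1 - l) * norm2 (x - y) ^+ 2.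

Definition is_argmin (Theta : set V) (g : V -> R) (th : V) : Prop :=
  Theta th /\ forall th', Theta th' -> g th <= g th'.

Definition majorant (phi g : V -> R) : Prop := forall x, phi x <= g x.

Definition first_order_surrogate (Theta : set V) (L : R) (phi : V -> R)
    (kappa : V) (g : V -> R) : Prop :=
  let h := fun x => g x - phi x in
  [/\ (forall th', is_argmin Theta g th' -> phi th' <= g th'),
      (forall x, differentiable h x),
      (forall x y, norm2 (grad h x - grad h y) <= L * norm2 (x - y)),
      h kappa = 0 &
      grad h kappa = 0].

Definition strong_surrogate (Theta : set V) (L rho : R) (phi : V -> R)
    (kappa : V) (g : V -> R) : Prop :=
  first_order_surrogate Theta L phi kappa g /\ strongly_convex rho g.

(* A run of MISO: the random indices hat t_1, ..., hat t_n form the history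
   h = [:: hat t_1; ...; hat t_n] (a seq 'I_T); the iterate theta_n = th h and
   the surrogates g_n^t = g h t are (arbitrary) deterministic functions of the
   history. *)
Definition miso_run (T : nat) (Theta : set V) (L rho : R)
    (F : 'I_T -> V -> R) (theta0 : V)
    (th : seq 'I_T -> V) (g : seq 'I_T -> 'I_T -> V -> R) : Prop :=
  [/\ th [::] = theta0,
      (forall t, majorant (F t) (g [::] t) /\
                 strong_surrogate Theta L rho (F t) theta0 (g [::] t)),
      (forall h i, majorant (F i) (g (rcons h i) i) /\
                   strong_surrogate Theta L rho (F i) (th h) (g (rcons h i) i)),
      (forall h i t, t != i -> g (rcons h i) t = g h t) &
      (forall h, h != [::] ->
         is_argmin Theta (fun x => T%:R^-1 * \sum_(t < T) g h t x) (th h))].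

(* expectation over n i.i.d. uniform indices in {1..T} *)
Definition expect_n (T n : nat) (X : seq 'I_T -> R) : R :=
  (T%:R ^+ n)^-1 * \sum_(h : n.-tuple 'I_T) X (tval h).

End MISO_defs.

(* Each surrogate g^t lies between f^t and f^t + L/2 |. - kappa^t|^2, by the
   descent lemma for the L-smooth error g^t - f^t, which vanishes to first
   order at its anchor point kappa^t.  The averaged surrogate gbar_n is
   rho-strongly convex with minimiser theta_n, so comparing it at theta_n and
   at thstar gives
     gbar_n(theta_n) - f* <= L/2 A_n - rho/2 |thstar - theta_n|^2,
   where A_n averages |thstar - kappa^t|^2 over the anchors.  A random step
   replaces one anchor by theta_n, hence E A_(n+1) = (1 - delta) E A_n
   + delta E |thstar - theta_n|^2.  For rho >= L the potential (L / 2 delta) A_n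
   thus pays for the gap; as gbar_n(theta_n) is nonincreasing and dominates
   f(theta_n), telescoping yields the O(1/n) rate.  If f is mu-strongly convex,
   also mu/2 |thstar - theta_n|^2 <= f(theta_n) - f*, so
   |thstar - theta_n|^2 <= L/(rho + mu) A_n and E A_n contracts by the factor
   (1 - delta) + delta L/(rho + mu). *)

From HB Require Import structures.
From mathcomp Require Import all_boot all_order all_algebra.
From mathcomp Require Import all_classical all_reals all_analysis.
From mathcomp Require Import ring lra.
Set Implicit Arguments. Unset Strict Implicit. Unset Printing Implicit Defensive.
Import Order.TTheory GRing.Theory Num.Theory.
Import numFieldNormedType.Exports.
Local Open Scope ring_scope.

Lemma sqr_le_mul_of_quadratic_ge0 (R : realFieldType) (a b s : R) :
  0 <= a -> (forall t, 0 <= a * t ^+ 2 - 2 * s * t + b) -> s ^+ 2 <= a * b.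
Proof.
move=> a_ge0 q_ge0.
have b_ge0 : 0 <= b by have := q_ge0 0; rewrite expr0n /=; lra.
have [a0|a_gt0] := eqVneq a 0.
  have [s0|s_neq0] := eqVneq s 0; first by rewrite s0 a0 expr0n mul0r.
  have := q_ge0 ((b + 1) / (2 * s)); rewrite a0 mul0r add0r.
  rewrite mulrCA mulfV ?mulf_neq0 ?pnatr_eq0 //; lra.
have a_pos : 0 < a by rewrite lt_def a_gt0.
have := q_ge0 (s / a).
have -> : a * (s / a) ^+ 2 - 2 * s * (s / a) + b = b - s ^+ 2 / a.
  by field; rewrite gt_eqF.
by rewrite subr_ge0 ler_pdivrMr // mulrC.
Qed.

Section Norm2.
Variables (R : realType) (p : nat).
Local Notation V := 'rV[R]_p.

Definition vdot (u w : V) : R := \sum_(i < p) u 0 i * w 0 i.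

Lemma norm2_ge0 (v : V) : 0 <= norm2 v.
Proof. exact: sqrtr_ge0. Qed.

Lemma norm2Z (c : R) (v : V) : norm2 (c *: v) = `|c| * norm2 v.
Proof.
rewrite /norm2 -sqrtr_sqr -sqrtrM ?sqr_ge0 // mulr_sumr.
by congr Num.sqrt; apply: eq_bigr => i _; rewrite mxE exprMn.
Qed.

Lemma norm2N (v : V) : norm2 (- v) = norm2 v.
Proof. by rewrite -scaleN1r norm2Z normrN normr1 mul1r. Qed.

Lemma vdot_le_norm2 (u w : V) : vdot u w <= norm2 u * norm2 w.
Proof.
have sq_ge0 (v : V) : 0 <= \sum_(i < p) v 0 i ^+ 2.
  by apply: sumr_ge0 => i _; exact: sqr_ge0.
have discr : vdot u w ^+ 2 <= (\sum_(i < p) u 0 i ^+ 2) * \sum_(i < p) w 0 i ^+ 2.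
  apply: sqr_le_mul_of_quadratic_ge0 => // t.
  have -> : (\sum_(i < p) u 0 i ^+ 2) * t ^+ 2 - 2 * vdot u w * t
            + \sum_(i < p) w 0 i ^+ 2 = \sum_(i < p) (t * u 0 i - w 0 i) ^+ 2.
    rewrite /vdot mulr_suml -mulrA mulr_suml mulr_sumr -sumrB -big_split.
    by apply: eq_bigr => i _ /=; ring.
  by apply: sumr_ge0 => i _; exact: sqr_ge0.
apply: le_trans (ler_norm _) _.
by rewrite /norm2 -sqrtrM // -sqrtr_sqr ler_sqrt // mulr_ge0.
Qed.

Lemma lipschitz_norm2_ge0 (G : V -> V) (L : R) : (0 < p)%N ->
  (forall x y, norm2 (G x - G y) <= L * norm2 (x - y)) -> 0 <= L.
Proof.
move=> p_gt0 lipG; pose e : V := delta_mx 0 (Ordinal p_gt0).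
have e1 : norm2 e = 1.
  rewrite /norm2 (bigD1 (Ordinal p_gt0)) //= big1 ?addr0 ?mxE ?eqxx ?expr1n ?sqrtr1 //.
  by move=> i /negbTE ne; rewrite mxE ne mulr0n expr0n.
by have := lipG e 0; rewrite subr0 e1 mulr1; apply: le_trans; exact: norm2_ge0.
Qed.

End Norm2.

Section Descent.
Variables (R : realType) (p : nat).
Local Notation V := 'rV[R]_p.

Lemma derive_grad (h : V -> R) (x v : V) : differentiable h x ->
  'D_v h x = vdot v (grad h x).
Proof.
move=> dh; rewrite deriveE // {1}(row_sum_delta v) linear_sum.
by apply: eq_bigr => i _; rewrite linearZ /= mxE -deriveE.
Qed.

Lemma is_derive_along_line (h : V -> R) (d k : V) (s : R) :
  differentiable h (s *: d + k) ->
  is_derive s 1 (fun s => h (s *: d + k)) ('D_d h (s *: d + k)).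
Proof.
move=> dh.
have E : (fun t : R => t^-1 *: (((fun s => h (s *: d + k)) \o shift s) (t *: 1)
                                 - h (s *: d + k)))
   = (fun t => t^-1 *: ((h \o shift (s *: d + k)) (t *: d) - h (s *: d + k))).
  apply/funext => t /=; congr (_ *: (h _ - _)).
  by rewrite -[t%:A]/(t * 1) mulr1 scalerDl addrA.
have D : derivable (fun s : R => h (s *: d + k)) s 1.
  by rewrite /derivable E; exact: diff_derivable.
by split => //; rewrite /derive E.
Qed.

Variables (h : V -> R) (L : R) (k : V).
Hypothesis h_diff : forall x, differentiable h x.
Hypothesis grad_lip : forall x y, norm2 (grad h x - grad h y) <= L * norm2 (x - y).
Hypothesis h_k : h k = 0.
Hypothesis grad_k : grad h k = 0.

Lemma derive_along_line_le (d : V) (c : R) : 0 <= c ->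
  'D_d h (c *: d + k) <= L * c * norm2 d ^+ 2.
Proof.
move=> c_ge0; rewrite derive_grad // -[grad h _]subr0 -grad_k.
apply: le_trans (vdot_le_norm2 _ _) _.
have := grad_lip (c *: d + k) k; rewrite addrK norm2Z ger0_norm // => lip.
have -> : L * c * norm2 d ^+ 2 = norm2 d * (L * (c * norm2 d)) by ring.
by rewrite ler_wpM2l ?norm2_ge0.
Qed.

(* Mean value theorem for psi s := h (s d + k) - K s^2, whose derivative is
   nonpositive on [0, 1]. *)
Lemma descent_le (x : V) : h x <= L / 2 * norm2 (x - k) ^+ 2.
Proof.
set d := x - k; set K := L / 2 * norm2 d ^+ 2.
pose psi := fun s : R => h (s *: d + k) - K * (s * s).
have dpsi (s : R) : is_derive s 1 psi ('D_d h (s *: d + k) - K * (s * 2)).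
  apply: is_deriveB; first exact: is_derive_along_line.
  have := is_deriveZ K (is_deriveM (@is_derive_id _ _ s (1:R)) (@is_derive_id _ _ s (1:R))).
  have -> : (fun s0 : R => K * (s0 * s0)) = K \*: (id * id) by apply/funext.
  by move=> H; apply: is_derive_eq H _; rewrite /= /GRing.scale /=; ring.
have psi_cont : {within `[0, 1], continuous psi}%classic.
  apply: continuous_subspaceT => t; apply: differentiable_continuous.
  exact/derivable1_diffP/(dpsi t).(ex_derive).
have [c c01 E] := MVT ltr01 (fun c _ => dpsi c) psi_cont.
have c_ge0 : 0 <= c by move: c01; rewrite in_itv /= => /andP[/ltW].
have psi0 : psi 0 = 0 by rewrite /psi scale0r add0r h_k; ring.
have psi1 : psi 1 = h x - K by rewrite /psi scale1r /d subrK; ring.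
have := derive_along_line_le d c_ge0.
by move: E; rewrite psi0 psi1 !subr0 mulr1 /K; lra.
Qed.

End Descent.

Lemma le0_of_le_scale (R : realFieldType) (a b : R) :
  (forall l, 0 < l -> l <= 1 -> a <= l * b) -> a <= 0.
Proof.
move=> H; apply/ler_addgt0Pr => e e_gt0; rewrite add0r.
have [b_le0|b_gt0] := lerP b 0.
  by have := H 1 ltr01 (lexx _); rewrite mul1r; lra.
have := H (Num.min 1 (e / b)); rewrite lt_min ltr01 divr_gt0 // ge_min lexx.
move=> /(_ isT isT) /le_trans; apply.
by rewrite -ler_pdivlMr // ge_min lexx orbT.
Qed.

Lemma strongly_convex_argmin_ge (R : realType) (p : nat) (Theta : set 'rV[R]_p)
    (G : 'rV[R]_p -> R) (mu : R) (x y : 'rV[R]_p) :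
  convex.convex_set Theta -> strongly_convex mu G -> is_argmin Theta G x ->
  Theta y -> G x + mu / 2 * norm2 (y - x) ^+ 2 <= G y.
Proof.
move=> cvxT scG [Tx minx] Ty.
set D := norm2 (y - x) ^+ 2.
suff : G x + mu / 2 * D - G y <= 0 by lra.
apply: (@le0_of_le_scale _ _ (mu / 2 * D)) => l l_gt0 l_le1.
have l_ge0 := ltW l_gt0.
have := cvxT y x (Itv01 l_ge0 l_le1) (mem_set Ty) (mem_set Tx).
rewrite inE => /minx /le_trans /(_ (scG y x l _)); rewrite l_ge0 l_le1 -/D.
move=> /(_ isT) Gx_le.
have : l * (G x + mu / 2 * D - G y) <= l * (l * (mu / 2 * D)) by lra.
by rewrite ler_pM2l.
Qed.

Section Average.
Variables (R : realType) (T : nat).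
Hypothesis T_gt0 : (0 < T)%N.

Definition avg (u : 'I_T -> R) : R := T%:R^-1 * \sum_(t < T) u t.

Lemma avg_cst (c : R) : avg (fun=> c) = c.
Proof.
rewrite /avg sumr_const card_ord -[c *+ T]mulr_natr mulrC mulfK //.
by rewrite pnatr_eq0 -lt0n.
Qed.

Lemma ler_avg (u v : 'I_T -> R) : (forall t, u t <= v t) -> avg u <= avg v.
Proof.
by move=> uv; rewrite ler_wpM2l ?invr_ge0 ?ler0n //; apply: ler_sum => t _.
Qed.

Lemma avgD (u v : 'I_T -> R) : avg (fun t => u t + v t) = avg u + avg v.
Proof. by rewrite /avg big_split mulrDr. Qed.

Lemma avgB (u v : 'I_T -> R) : avg (fun t => u t - v t) = avg u - avg v.
Proof. by rewrite /avg sumrB mulrBr. Qed.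

Lemma avgZ (c : R) (u : 'I_T -> R) : avg (fun t => c * u t) = c * avg u.
Proof. by rewrite /avg -mulr_sumr mulrCA. Qed.

Definition avg_fun (aT : Type) (G : 'I_T -> aT -> R) (x : aT) : R :=
  avg (fun t => G t x).

End Average.

Lemma strongly_convex_avg (R : realType) (p T : nat) (mu : R)
    (G : 'I_T -> 'rV[R]_p -> R) : (0 < T)%N ->
  (forall t, strongly_convex mu (G t)) ->
  strongly_convex mu (avg_fun G).
Proof.
move=> T_gt0 G_sc x y l l01.
apply: le_trans (ler_avg (fun t => G_sc t x y l l01)) _.
by rewrite avgB (avg_cst T_gt0) avgD !avgZ.
Qed.

Section Expectation.
Variables (R : realType) (T : nat).
Hypothesis T_gt0 : (0 < T)%N.

Lemma sum_tuple_rcons n (X : seq 'I_T -> R) :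
  \sum_(u : n.+1.-tuple 'I_T) X u =
  \sum_(h : n.-tuple 'I_T) \sum_(i < T) X (rcons h i).
Proof.
rewrite pair_big /=.
pose join := fun q : n.-tuple 'I_T * 'I_T => rcons_tuple q.1 q.2.
have join_inj : injective join.
  by move=> [a b] [c d] /(congr1 val) /= /rcons_inj [/val_inj -> ->].
have join_bij : bijective join.
  apply: (inj_card_bij join_inj).
  by rewrite card_prod !card_tuple card_ord expnS mulnC.
by rewrite (reindex join) //=; exact: onW_bij.
Qed.

Lemma expect_rcons n (X : seq 'I_T -> R) :
  expect_n n.+1 X = expect_n n (fun h => avg (fun i => X (rcons h i))).
Proof.
rewrite /expect_n /avg sum_tuple_rcons -mulr_sumr exprS invfM.
by rewrite mulrA (mulrC _^-1).
Qed.

Lemma ler_expect n (X Y : seq 'I_T -> R) :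
  (forall h : n.-tuple 'I_T, X h <= Y h) -> expect_n n X <= expect_n n Y.
Proof.
move=> XY; rewrite /expect_n ler_wpM2l ?invr_ge0 ?exprn_ge0 ?ler0n //.
by apply: ler_sum => h _.
Qed.

Lemma expect_cst n (c : R) : expect_n n (fun _ : seq 'I_T => c) = c.
Proof.
rewrite /expect_n sumr_const card_tuple card_ord -[c *+ _]mulr_natr natrX.
by rewrite mulrC mulfK // expf_neq0 // pnatr_eq0 -lt0n.
Qed.

Lemma expect_ge0 n (X : seq 'I_T -> R) :
  (forall h : n.-tuple 'I_T, 0 <= X h) -> 0 <= expect_n n X.
Proof. by move=> X_ge0; rewrite -(expect_cst n 0); exact: ler_expect. Qed.

Lemma tuple_neq_nil n (h : n.+1.-tuple 'I_T) : tval h != [::].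
Proof. by rewrite -size_eq0 size_tuple. Qed.

Lemma expectZ n (c : R) (X : seq 'I_T -> R) :
  expect_n n (fun h => c * X h) = c * expect_n n X.
Proof. by rewrite /expect_n -mulr_sumr mulrCA. Qed.

Lemma expectB n (X Y : seq 'I_T -> R) :
  expect_n n (fun h => X h - Y h) = expect_n n X - expect_n n Y.
Proof. by rewrite /expect_n sumrB mulrBr. Qed.

End Expectation.

Lemma norm2_dim0 (R : realType) (v : 'rV[R]_0) : norm2 v = 0.
Proof. by rewrite /norm2 big_ord0 sqrtr0. Qed.

Lemma expect_dim0 (R : realType) (T n : nat) (th : seq 'I_T -> 'rV[R]_0)
    (Phi : 'rV[R]_0 -> R) : (0 < T)%N ->
  expect_n n (fun h => Phi (th h)) = Phi 0.
Proof.
move=> T_gt0; rewrite -(expect_cst T_gt0 n (Phi 0)); congr (_ * _).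
by apply: eq_bigr => h _; rewrite [th _]thinmx0.
Qed.

Section MISO.
Variables (R : realType) (p T : nat) (Theta : set 'rV[R]_p)
  (F : 'I_T -> 'rV[R]_p -> R) (L rho : R) (theta0 thstar : 'rV[R]_p)
  (th : seq 'I_T -> 'rV[R]_p) (g : seq 'I_T -> 'I_T -> 'rV[R]_p -> R).
Local Notation V := 'rV[R]_p.
Local Notation delta := (T%:R^-1 : R).
Hypothesis T_gt0 : (0 < T)%N.
Hypothesis cvxTheta : convex.convex_set Theta.
Hypothesis run : miso_run Theta L rho F theta0 th g.

Local Notation f := (avg_fun F).
Hypothesis thstar_min : is_argmin Theta f thstar.

(* [anchor h t] is the point at which the surrogate [g h t] was built: the
   iterate preceding the last draw of [t] in [h], or [theta0] if [t] was
   never drawn. *)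
Fixpoint anchor_rev (r : seq 'I_T) (t : 'I_T) : V :=
  if r is i :: r' then if t == i then th (rev r') else anchor_rev r' t
  else theta0.
Definition anchor h t := anchor_rev (rev h) t.

Lemma anchor_rcons h i t :
  anchor (rcons h i) t = if t == i then th h else anchor h t.
Proof. by rewrite /anchor rev_rcons /= revK. Qed.

Lemma surrogate_spec h t : majorant (F t) (g h t) /\
  strong_surrogate Theta L rho (F t) (anchor h t) (g h t).
Proof.
case: run => _ spec0 spec_new keep _.
elim/last_ind: h t => [|h i IH] t; first exact: spec0.
rewrite anchor_rcons; case: eqP => [->|/eqP ne]; first exact: spec_new.
by rewrite keep.
Qed.

Lemma surrogate_le h t x :
  g h t x <= F t x + L / 2 * norm2 (x - anchor h t) ^+ 2.
Proof.
have [_ [[_ h_diff grad_lip h_k grad_k] _]] := surrogate_spec h t.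
by rewrite -lerBlDl (descent_le h_diff grad_lip h_k grad_k).
Qed.

Lemma surrogate_at_anchor h i : g (rcons h i) i (th h) = F i (th h).
Proof.
have [_ [[_ _ _ h_anchor _] _]] := surrogate_spec (rcons h i) i.
by move/eqP: h_anchor; rewrite anchor_rcons eqxx subr_eq0 => /eqP.
Qed.

Lemma miso_L_ge0 : (0 < p)%N -> 0 <= L.
Proof.
have [_ [[_ _ grad_lip _ _] _]] := surrogate_spec [::] (Ordinal T_gt0).
by move=> p_gt0; exact: lipschitz_norm2_ge0 p_gt0 grad_lip.
Qed.

Definition gap h := avg_fun (g h) (th h) - f thstar.
Definition anchor_dist h := avg (fun t => norm2 (thstar - anchor h t) ^+ 2).
Definition iter_dist h := norm2 (thstar - th h) ^+ 2.

Lemma f_le_avg_surrogate h x : f x <= avg_fun (g h) x.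
Proof. by apply: ler_avg => t; have [maj _] := surrogate_spec h t. Qed.

Lemma th_argmin h : h != [::] -> is_argmin Theta (avg_fun (g h)) (th h).
Proof. by case: run => _ _ _ _; apply. Qed.

Lemma gap_le h : h != [::] ->
  gap h <= L / 2 * anchor_dist h - rho / 2 * iter_dist h.
Proof.
move=> h_neq0.
have avg_sc : strongly_convex rho (avg_fun (g h)).
  by apply: strongly_convex_avg => // t; have [_ []] := surrogate_spec h t.
have := strongly_convex_argmin_ge cvxTheta avg_sc (th_argmin h_neq0) thstar_min.1.
have : avg_fun (g h) thstar <= f thstar + L / 2 * anchor_dist h.
  rewrite /anchor_dist -avgZ -avgD; apply: ler_avg => t; exact: surrogate_le.
rewrite /gap /iter_dist; lra.
Qed.

Lemma anchor_dist_rcons h i : anchor_dist (rcons h i) =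
  anchor_dist h + delta * (iter_dist h - norm2 (thstar - anchor h i) ^+ 2).
Proof.
rewrite /anchor_dist /avg -mulrDr; congr (_ * _).
rewrite (bigD1 i) //= [in RHS](bigD1 i) //= anchor_rcons eqxx.
under eq_bigr => t /negbTE ne do rewrite anchor_rcons ne.
by rewrite /iter_dist; ring.
Qed.

Lemma avg_anchor_dist_rcons h : avg (fun i => anchor_dist (rcons h i)) =
  (1 - delta) * anchor_dist h + delta * iter_dist h.
Proof.
rewrite (_ : (fun i => _) = fun i => anchor_dist h + delta *
           (iter_dist h - norm2 (thstar - anchor h i) ^+ 2)); last first.
  by apply/funext => i; exact: anchor_dist_rcons.
by rewrite avgD avgZ avgB !avg_cst // -/(anchor_dist h); ring.
Qed.

Lemma anchor_dist_single i : anchor_dist [:: i] = norm2 (thstar - theta0) ^+ 2.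
Proof.
have th0 : th [::] = theta0 by case: run.
rewrite -[[:: i]]/(rcons [::] i) anchor_dist_rcons /iter_dist th0 /anchor_dist.
by rewrite /anchor /= (avg_cst T_gt0) subrr mulr0 addr0.
Qed.

Lemma gap_rcons_le h i : h != [::] -> gap (rcons h i) <= gap h.
Proof.
move=> h_neq0; rewrite lerD2r.
have [_ min_th] : is_argmin Theta (avg_fun (g (rcons h i))) (th (rcons h i)).
  by apply: th_argmin; rewrite -size_eq0 size_rcons.
apply: le_trans (min_th _ (th_argmin h_neq0).1) _; apply: ler_avg => t.
have [->|ne] := eqVneq t i.
  by rewrite surrogate_at_anchor; have [maj _] := surrogate_spec h i.
by case: run => _ _ _ keep _; rewrite keep.
Qed.

Lemma anchor_dist_ge0 h : 0 <= anchor_dist h.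
Proof. by rewrite -(avg_cst T_gt0 0); apply: ler_avg => t; exact: sqr_ge0. Qed.

Definition expect_gap n := expect_n n gap.
Definition expect_anchor_dist n := expect_n n anchor_dist.

Lemma expect_anchor_dist_ge0 n : 0 <= expect_anchor_dist n.
Proof. by apply: expect_ge0 => // h; exact: anchor_dist_ge0. Qed.

Lemma expect_anchor_dist1 : expect_anchor_dist 1 = norm2 (thstar - theta0) ^+ 2.
Proof.
rewrite /expect_anchor_dist -(expect_cst T_gt0 1 (norm2 (thstar - theta0) ^+ 2)).
congr (_ * _).
by apply: eq_bigr => -[[|i []]] //= _; rewrite anchor_dist_single.
Qed.

Lemma expect_gap_nonincreasing n : expect_gap n.+2 <= expect_gap n.+1.
Proof.
rewrite /expect_gap expect_rcons; apply: ler_expect => h.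
rewrite -(avg_cst T_gt0 (gap h)); apply: ler_avg => i.
exact: gap_rcons_le (tuple_neq_nil h).
Qed.

Lemma f_gap_le_gap h : f (th h) - f thstar <= gap h.
Proof. by rewrite lerD2r f_le_avg_surrogate. Qed.

Section Rates.
Hypothesis L_ge0 : 0 <= L.
Hypothesis L_le_rho : L <= rho.

Lemma rho_ge0 : 0 <= rho.
Proof. exact: le_trans L_ge0 L_le_rho. Qed.

Lemma gap_le_anchor_dist_drop h : h != [::] ->
  gap h <= L * T%:R / 2 * (anchor_dist h - avg (fun i => anchor_dist (rcons h i))).
Proof.
move=> h_neq0; rewrite avg_anchor_dist_rcons.
have T_neq0 : T%:R != 0 :> R by rewrite pnatr_eq0 -lt0n.
have -> : L * T%:R / 2 * (anchor_dist h - ((1 - delta) * anchor_dist h +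
    delta * iter_dist h)) = L / 2 * anchor_dist h - L / 2 * iter_dist h by field.
have := gap_le h_neq0; have : 0 <= (rho - L) * iter_dist h.
  by rewrite mulr_ge0 ?subr_ge0 ?sqr_ge0.
lra.
Qed.

Lemma expect_gap_le n : expect_gap n.+1 <=
  L * T%:R / 2 * (expect_anchor_dist n.+1 - expect_anchor_dist n.+2).
Proof.
rewrite /expect_anchor_dist [expect_n n.+2 _]expect_rcons -expectB -expectZ.
by apply: ler_expect => h; exact: gap_le_anchor_dist_drop (tuple_neq_nil h).
Qed.

Lemma expect_gap_sum_le n : n.+1%:R * expect_gap n.+1 <=
  L * T%:R / 2 * (norm2 (thstar - theta0) ^+ 2 - expect_anchor_dist n.+2).
Proof.
rewrite -expect_anchor_dist1; elim: n => [|n IH]; first by rewrite mul1r expect_gap_le.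
have := expect_gap_le n.+1; have := expect_gap_nonincreasing n.
move=> /(ler_wpM2l (ler0n _ n.+1)) mono.
rewrite [n.+2%:R]mulrSr mulrDl mul1r; lra.
Qed.

Lemma expect_f_gap_le n : (1 <= n)%N ->
  expect_n n (fun h => f (th h) - f thstar) <=
  L * norm2 (thstar - theta0) ^+ 2 / (2 * delta * n%:R).
Proof.
case: n => [//|n] _.
have T_pos : 0 < T%:R :> R by rewrite ltr0n.
have n_pos : 0 < n.+1%:R :> R by rewrite ltr0n.
have f_gap_le : expect_n n.+1 (fun h => f (th h) - f thstar) <= expect_gap n.+1.
  by apply: ler_expect => h; exact: f_gap_le_gap.
have A_ge0 : 0 <= L * T%:R / 2 * expect_anchor_dist n.+2.
  by apply: mulr_ge0 (expect_anchor_dist_ge0 _); rewrite !mulr_ge0 ?invr_ge0.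
have sum_le := expect_gap_sum_le n.
rewrite [X in _ <= X](_ : _ = L * T%:R / 2 * norm2 (thstar - theta0) ^+ 2 / n.+1%:R).
  rewrite ler_pdivlMr // mulrC.
  by apply: le_trans (ler_wpM2l (ltW n_pos) f_gap_le) _; lra.
by field; rewrite !gt_eqF.
Qed.

Lemma f_gap_le_anchor_dist h : h != [::] ->
  f (th h) - f thstar <= L / 2 * anchor_dist h.
Proof.
move=> h_neq0; have := gap_le h_neq0; have := f_gap_le_gap h.
have : 0 <= rho * iter_dist h.
  by rewrite mulr_ge0 ?rho_ge0 //; exact: sqr_ge0.
lra.
Qed.

Section StronglyConvex.
Variable mu : R.
Hypothesis mu_gt0 : 0 < mu.
Hypothesis f_sc : strongly_convex mu f.

Definition rate := (1 - delta) + delta * (L / (rho + mu)).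

Lemma rho_mu_gt0 : 0 < rho + mu.
Proof. exact: ltr_wpDl rho_ge0 mu_gt0. Qed.

Lemma iter_dist_le h : h != [::] -> iter_dist h <= L / (rho + mu) * anchor_dist h.
Proof.
move=> h_neq0.
have := strongly_convex_argmin_ge cvxTheta f_sc thstar_min (th_argmin h_neq0).1.
rewrite -opprB norm2N -/(iter_dist h).
have := gap_le h_neq0; have := f_gap_le_gap h.
move=> f_gap gap_ub sc_lb.
rewrite [X in _ <= X]mulrAC ler_pdivlMr ?rho_mu_gt0 //; lra.
Qed.

Lemma ratio_ge0 : 0 <= L / (rho + mu).
Proof. exact: divr_ge0 L_ge0 (ltW rho_mu_gt0). Qed.

Lemma ratio_le_rate : L / (rho + mu) <= rate.
Proof.
have delta_le1 : delta <= 1 by rewrite invf_le1 ?ltr0n // ler1n.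
have ratio_le1 : L / (rho + mu) <= 1.
  by rewrite ler_pdivrMr ?rho_mu_gt0 // mul1r ler_wpDr // ltW.
rewrite -subr_ge0 (_ : _ - _ = (1 - delta) * (1 - L / (rho + mu))) /rate; last by ring.
by rewrite mulr_ge0 // subr_ge0.
Qed.

Lemma rate_ge0 : 0 <= rate.
Proof. exact: le_trans ratio_ge0 ratio_le_rate. Qed.

Lemma expect_anchor_dist_contract n :
  expect_anchor_dist n.+2 <= rate * expect_anchor_dist n.+1.
Proof.
rewrite /expect_anchor_dist expect_rcons -expectZ; apply: ler_expect => h.
rewrite avg_anchor_dist_rcons /rate.
have := ler_wpM2l (_ : 0 <= delta) (iter_dist_le (tuple_neq_nil h)).
by rewrite invr_ge0 ler0n => /(_ isT); lra.
Qed.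

Lemma expect_anchor_dist_le n :
  expect_anchor_dist n.+1 <= rate ^+ n * norm2 (thstar - theta0) ^+ 2.
Proof.
elim: n => [|n IH]; first by rewrite expect_anchor_dist1 expr0 mul1r.
apply: le_trans (expect_anchor_dist_contract n) _.
by rewrite exprS -mulrA ler_wpM2l // rate_ge0.
Qed.

Lemma expect_iter_dist_le n : (1 <= n)%N ->
  expect_n n iter_dist <= rate ^+ n * norm2 (thstar - theta0) ^+ 2.
Proof.
case: n => [//|n] _.
apply: le_trans (_ : _ <= L / (rho + mu) * expect_anchor_dist n.+1) _.
  by rewrite -expectZ; apply: ler_expect => h; exact: iter_dist_le (tuple_neq_nil h).
apply: le_trans (ler_wpM2l ratio_ge0 (expect_anchor_dist_le n)) _.
rewrite [rate ^+ n.+1]exprS -[rate * _ * _]mulrA; apply: ler_wpM2r; last exact: ratio_le_rate.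
exact: mulr_ge0 (exprn_ge0 _ rate_ge0) (sqr_ge0 _).
Qed.

Lemma expect_f_gap_le_rate n : (1 <= n)%N ->
  expect_n n (fun h => f (th h) - f thstar) <=
  rate ^+ n.-1 * (L * norm2 (thstar - theta0) ^+ 2 / 2).
Proof.
case: n => [//|n] _ /=.
apply: le_trans (_ : _ <= L / 2 * expect_anchor_dist n.+1) _.
  rewrite -expectZ; apply: ler_expect => h.
  exact: f_gap_le_anchor_dist (tuple_neq_nil h).
rewrite (_ : rate ^+ n * _ = L / 2 * (rate ^+ n * norm2 (thstar - theta0) ^+ 2)).
  by rewrite ler_wpM2l ?divr_ge0 ?expect_anchor_dist_le.
by ring.
Qed.

End StronglyConvex.
End Rates.

End MISO.

Theorem proposition6p2 (R : realType) (p T : nat) (Theta : set 'rV[R]_p)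
  (F : 'I_T -> 'rV[R]_p -> R) (L rho : R) (theta0 thstar : 'rV[R]_p)
  (th : seq 'I_T -> 'rV[R]_p) (g : seq 'I_T -> 'I_T -> 'rV[R]_p -> R) :
  (0 < T)%N ->
  convex.convex_set Theta ->
  (forall t, continuous (F t)) ->
  let f := fun x => T%:R^-1 * \sum_(t < T) F t x in
  convex_fun f ->
  is_argmin Theta f thstar ->
  let fstar := f thstar in
  let delta := T%:R^-1 : R in
  Theta theta0 ->
  L <= rho ->
  miso_run Theta L rho F theta0 th g ->
  (forall n : nat, (1 <= n)%N ->
     expect_n n (fun h => f (th h) - fstar)
       <= L * norm2 (thstar - theta0) ^+ 2 / (2 * delta * n%:R))
  /\
  (forall mu : R, 0 < mu -> strongly_convex mu f ->
     forall n : nat, (1 <= n)%N ->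
       expect_n n (fun h => norm2 (thstar - th h) ^+ 2)
         <= ((1 - delta) + delta * (L / (rho + mu))) ^+ n
              * norm2 (thstar - theta0) ^+ 2
       /\
       expect_n n (fun h => f (th h) - fstar)
         <= ((1 - delta) + delta * (L / (rho + mu))) ^+ n.-1
              * (L * norm2 (thstar - theta0) ^+ 2 / 2)).
Proof.
move=> T_gt0 cvxTheta _ f _ thstar_min fstar delta _ L_le_rho run.
(* For p = 0 the Lipschitz condition does not force L >= 0, but every
   quantity in the bounds vanishes. *)
have [p0|p_gt0] := posnP p.
  subst p; have gap0 n : expect_n n (fun h => f (th h) - fstar) = 0.
    rewrite (expect_dim0 _ th (fun x => f x - fstar)) //.
    by rewrite /fstar [thstar]thinmx0 subrr.
  have dist0 n : expect_n n (fun h => norm2 (thstar - th h) ^+ 2) = 0.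
    by rewrite (expect_dim0 _ th (fun x => norm2 (thstar - x) ^+ 2)) // norm2_dim0 expr2 mulr0.
  rewrite norm2_dim0 expr2 !(mulr0, mul0r).
  by split=> [n _|mu _ _ n _]; [|split]; rewrite ?gap0 ?dist0 ?mulr0 ?mul0r.
have L_ge0 := miso_L_ge0 T_gt0 run p_gt0.
split=> [n|mu mu_gt0 f_sc n] n_ge1.
  exact (expect_f_gap_le T_gt0 cvxTheta run thstar_min L_ge0 L_le_rho n_ge1).
split.
  exact (expect_iter_dist_le T_gt0 cvxTheta run thstar_min L_ge0 L_le_rho mu_gt0 f_sc n_ge1).
exact (expect_f_gap_le_rate T_gt0 cvxTheta run thstar_min L_ge0 L_le_rho mu_gt0 f_sc n_ge1).
Qed.
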